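(* Let $V$ be a reflexive Banach space, $1<p<\infty$, and let $g\in L^p_b(\mathbb R,V)$ be time regular, or space regular, or normal. Then $g$ is weakly normal.
   Context: $L^p_b(\mathbb R,V)$ has norm $\sup_{s}\|g\|_{L^p((s,s+1),V)}$. Time regular: for every $\varepsilon>0$ there is $g_\varepsilon\in C^k_b(\mathbb R,V)$ for all $k$ with $\|g-g_\varepsilon\|_{L^p_b(\mathbb R,V)}\le\varepsilon$. Space regular: for every $\varepsilon>0$ there are a finite-dimensional $V_\varepsilon\subset V$ and $g_\varepsilon\in L^p_b(\mathbb R,V_\varepsilon)$ with $\|g-g_\varepsilon\|_{L^p_b(\mathbb R,V)}\le\varepsilon$. Normal: $\sup_{t\in\mathbb R}\int_t^{t+\tau}\|g(s)\|_V^p\,ds\to0$ as $\tau\to0$. Weakly normal: for every $\varepsilon>0$ there exist $\tau=\tau(\varepsilon)>0$, a finite-dimensional subspace $V_\varepsilon\subset V$ and $g_\varepsilon\in L^p_b(\mathbb R,V_\varepsilon)$ such that $\sup_{t\in\mathbb R}\int_t^{t+\tau}\|g(s)-g_\varepsilon(s)\|_V^p\,ds\le\varepsilon$. *)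

From HB Require Import structures.
From mathcomp Require Import all_boot all_order all_algebra.
From mathcomp Require Import all_classical all_reals all_analysis.
Set Implicit Arguments. Unset Strict Implicit. Unset Printing Implicit Defensive.
Import Order.TTheory GRing.Theory Num.Theory.
Import numFieldNormedType.Exports.
Local Open Scope classical_set_scope.
Local Open Scope ring_scope.

Section Defs.
Context {R : realType} {V : normedModType R}.

Local Notation mu := (@lebesgue_measure R).

Definition dual_elt (f : V -> R) : Prop :=
  (forall (a : R) (u v : V), f (a *: u + v) = a * f u + f v) /\
  (exists M : R, forall v, `|f v| <= M * `|v|).

(* V is reflexive: every bounded linear functional on V^* (with the dual
   (operator) norm) is evaluation at some point of V *)
Definition reflexive_space : Prop :=
  forall Phi : (V -> R) -> R,
    (forall (a : R) (f h : V -> R), dual_elt f -> dual_elt h ->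
       Phi (fun x => a * f x + h x) = a * Phi f + Phi h) ->
    (exists C : R, forall (f : V -> R) (M : R), dual_elt f -> 0 <= M ->
       (forall v, `|f v| <= M * `|v|) -> `|Phi f| <= C * M) ->
    exists v : V, forall f, dual_elt f -> Phi f = f v.

Definition V_simple_fun (h : R -> V) : Prop :=
  finite_set (range h) /\ forall v : V, measurable (h @^-1` [set v]).

Definition strongly_measurable (g : R -> V) : Prop :=
  exists u : nat -> R -> V, (forall n, V_simple_fun (u n)) /\
    {ae mu, forall t, (fun n => u n t) @ \oo --> g t}.

Definition loc_int (p : R) (g : R -> V) (t tau : R) : \bar R :=
  \int[mu]_(s in `]t, (t + tau)%R[) ((`|g s| `^ p)%:E).

Definition Lpb (p : R) (g : R -> V) : Prop :=
  strongly_measurable g /\ exists M : R, forall t, (loc_int p g t 1 <= M%:E)%E.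

(* ||f - h||_{L^p_b(R,V)} <= eps, i.e. sup_s ||f - h||_{L^p((s,s+1),V)} <= eps *)
Definition Lpb_dist_le (p : R) (f h : R -> V) (eps : R) : Prop :=
  forall s, (loc_int p (fun x => (f x - h x)%R) s 1 <= (eps `^ p)%:E)%E.

Definition Cinf_b (h : R -> V) : Prop :=
  forall k : nat,
    (forall x, derivable (derive1n k h) x 1) /\
    continuous (derive1n k h) /\
    exists M : R, forall x, `|derive1n k h x| <= M.

Definition fin_dim_valued (h : R -> V) : Prop :=
  exists (n : nat) (e : 'I_n -> V), forall t, exists c : 'I_n -> R,
    h t = \sum_(i < n) c i *: e i.

Definition time_regular (p : R) (g : R -> V) : Prop :=
  forall eps : R, 0 < eps -> exists h : R -> V,
    Cinf_b h /\ Lpb_dist_le p g h eps.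

Definition space_regular (p : R) (g : R -> V) : Prop :=
  forall eps : R, 0 < eps -> exists h : R -> V,
    fin_dim_valued h /\ Lpb p h /\ Lpb_dist_le p g h eps.

Definition Lpb_normal (p : R) (g : R -> V) : Prop :=
  forall eps : R, 0 < eps -> exists delta : R, 0 < delta /\
    forall tau, 0 < tau -> tau < delta -> forall t, (loc_int p g t tau <= eps%:E)%E.

Definition weakly_normal (p : R) (g : R -> V) : Prop :=
  forall eps : R, 0 < eps -> exists tau : R, 0 < tau /\ exists h : R -> V,
    fin_dim_valued h /\ Lpb p h /\
    forall t, (loc_int p (fun x => (g x - h x)%R) t tau <= eps%:E)%E.

End Defs.

(* Space-regular
   functions are weakly normal with tau = 1, and normal ones with h = 0.  A
   time-regular g is normal: if h is bounded by M and close to g in L^p_b, then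
   |g|^p <= 2^p |g - h|^p + (2M)^p pointwise, so the integral of |g|^p over an
   interval of length tau <= 1 is at most 2^p ||g - h||^p + (2M)^p tau. *)
From HB Require Import structures.
From mathcomp Require Import all_boot all_order all_algebra.
From mathcomp Require Import all_classical all_reals all_analysis.
From mathcomp Require Import measurable_realfun ring lra.
Set Implicit Arguments. Unset Strict Implicit. Unset Printing Implicit Defensive.
Import Order.TTheory GRing.Theory Num.Theory.
Import numFieldNormedType.Exports.
Local Open Scope classical_set_scope.
Local Open Scope ring_scope.

(* The integral of a nonnegative function is the supremum of the integrals of
   the simple functions below it, so the two comparisons below need no
   measurability of the integrands; none is available for |g|^p. *)
Section ge0_integral_nonmeasurable.
Local Open Scope ereal_scope.
Context d (T : measurableType d) (R : realType) (mu : {measure set T -> \bar R}).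
Import HBNNSimple.

Lemma ge0_le_integral_nonmeasurable (D : set T) (f1 f2 : T -> \bar R) :
  (forall x, D x -> 0 <= f1 x) -> (forall x, D x -> f1 x <= f2 x) ->
  \int[mu]_(x in D) f1 x <= \int[mu]_(x in D) f2 x.
Proof.
move=> f10 f12.
have f20 x : D x -> 0 <= f2 x by move=> Dx; exact: le_trans (f10 _ Dx) (f12 _ Dx).
rewrite !ge0_integralE //.
apply: ge_ereal_sup => _ [h hf <-]; apply: ereal_sup_ubound; exists h => // x.
apply: le_trans (hf x) _; rewrite /patch; case: ifP => // /set_mem; exact: f12.
Qed.

(* A simple [h <= a A + c] on [D] yields the measurable [(h - c)^+ / a <= A]. *)
Lemma ge0_integral_le_affine (D : set T) (f A : T -> \bar R) (a c : R) :
  measurable D -> (0 < a)%R -> (0 <= c)%R ->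
  (forall x, D x -> 0 <= f x) -> (forall x, D x -> 0 <= A x) ->
  (forall x, D x -> f x <= a%:E * A x + c%:E) ->
  \int[mu]_(x in D) f x <= a%:E * \int[mu]_(x in D) A x + c%:E * mu D.
Proof.
move=> mD a0 c0 f0 A0 fA.
rewrite [X in X <= _]ge0_integralE //.
apply: ge_ereal_sup => _ [h hf <-].
have hD x : ~ D x -> h x = 0%R.
  move=> nDx; have := hf x; rewrite /patch; case: ifP => [/set_mem//|_].
  by rewrite lee_fin => h0; apply/eqP; rewrite eq_le h0 fun_ge0.
have -> : sintegral mu h = \int[mu]_(x in D) (h x)%:E.
  rewrite integral_nnsfun //; apply: eq_sintegral => x /=; apply/esym.
  by rewrite /patch; case: ifP => // /negbT; rewrite notin_setE => /hD ->.
have mh : measurable_fun D h by exact: measurable_funS (measurable_funPT h).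
pose k x := Num.max (h x - c)%R 0%R.
have mk : measurable_fun D k.
  by apply: measurable_maxr => //; apply: measurable_funB.
have k0 x : (0 <= k x)%R by rewrite /k le_max lexx orbT.
apply: (@le_trans _ _ (\int[mu]_(x in D) ((k x)%:E + c%:E))).
  apply: ge0_le_integral => //.
  - by move=> x _; rewrite lee_fin fun_ge0.
  - exact/measurable_EFinP.
  - by under eq_fun do rewrite -EFinD; apply/measurable_EFinP/measurable_funD.
  - by move=> x Dx; rewrite -EFinD lee_fin /k -lerBlDr le_max lexx.
rewrite (@ge0_integralD _ _ _ mu D mD (EFin \o k) (cst c%:E)) //; last 2 first.
- by move=> x _; rewrite lee_fin.
- exact/measurable_EFinP.
rewrite integral_cst //; apply: leeD2r.
have -> : \int[mu]_(x in D) (k x)%:E = a%:E * \int[mu]_(x in D) (k x / a)%:E.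
  rewrite -ge0_integralZl //; last 3 first.
  - by apply/measurable_EFinP/measurable_funM.
  - by move=> x _; rewrite lee_fin divr_ge0 // ltW.
  - by rewrite lee_fin ltW.
  by apply: eq_integral => x _; rewrite -EFinM mulrC divfK // gt_eqF.
apply: lee_wpmul2l; first by rewrite lee_fin ltW.
apply: ge0_le_integral_nonmeasurable => [x _|x Dx].
  by rewrite lee_fin divr_ge0 // ltW.
have := fA x Dx; have := A0 x Dx; have := hf x; rewrite /patch mem_set //.
case: (A x) => [r| |] //=; last by move=> *; rewrite leey.
move=> hfx; rewrite lee_fin => r0 fle.
have : (h x <= a * r + c)%R by rewrite -lee_fin EFinD EFinM (le_trans hfx).
move=> hle; rewrite lee_fin ler_pdivrMr // /k ge_max lerBlDr mulrC hle /=.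
by rewrite mulr_ge0 // ltW.
Qed.

End ge0_integral_nonmeasurable.

Lemma powR_add_le (R : realType) (x y p : R) : 0 <= p -> 0 <= x -> 0 <= y ->
  (x + y) `^ p <= (2 * x) `^ p + (2 * y) `^ p.
Proof.
move=> p0 x0 y0.
have [xy|yx] := leP x y.
  apply: le_trans (_ : (2 * y) `^ p <= _); last by rewrite lerDr powR_ge0.
  by apply: ge0_ler_powR => //; rewrite ?nnegrE; lra.
apply: le_trans (_ : (2 * x) `^ p <= _); last by rewrite lerDl powR_ge0.
by apply: ge0_ler_powR => //; rewrite ?nnegrE; lra.
Qed.

Lemma lebesgue_measure_itv_len (R : realType) (t tau : R) : 0 < tau ->
  (@lebesgue_measure R `]t, (t + tau)%R[ = tau%:E)%E.
Proof.
move=> tau0; rewrite lebesgue_measure_itv /= lte_fin ltrDl tau0.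
by rewrite -EFinB addrAC subrr add0r.
Qed.

Section loc_int.
Context {R : realType} {V : normedModType R}.
Implicit Types (p t tau eps : R) (g h : R -> V).

Lemma le_loc_int p g t tau tau' : tau <= tau' ->
  (loc_int p g t tau <= loc_int p g t tau')%E.
Proof.
move=> tau_le; rewrite /loc_int integral_mkcond [X in (_ <= X)%E]integral_mkcond.
apply: ge0_le_integral_nonmeasurable => x _; rewrite /patch.
  by case: ifP => _ //; rewrite lee_fin powR_ge0.
case: ifP => xin; last by case: ifP => _ //; rewrite lee_fin powR_ge0.
rewrite ifT //; move: xin; rewrite !inE /= !in_itv /= => /andP[-> /= xl].
by apply: lt_le_trans xl _; rewrite lerD2l.
Qed.

Lemma loc_int_le_Lpb_dist p g h eps t : 0 < p -> 0 <= eps ->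
  Lpb_dist_le p g h (eps `^ p^-1) ->
  (loc_int p (fun x => (g x - h x)%R) t 1 <= eps%:E)%E.
Proof.
by move=> p0 eps0 /(_ t); rewrite -powRrM mulVf ?gt_eqF // powRr1.
Qed.

Lemma loc_int_le_bounded_approx p g h M t tau : 0 <= p -> 0 < tau ->
  (forall x, `|h x| <= M) ->
  (loc_int p g t tau <=
   (2 `^ p)%:E * loc_int p (fun x => (g x - h x)%R) t tau + ((2 * M) `^ p * tau)%:E)%E.
Proof.
move=> p0 tau0 hM; have M0 : 0 <= M by exact: le_trans (hM 0).
rewrite EFinM -(lebesgue_measure_itv_len t tau0).
apply: ge0_integral_le_affine => // [|x _]; first exact: powR_ge0.
rewrite -EFinM -EFinD lee_fin -powRM //.
apply: le_trans _ (powR_add_le p0 (normr_ge0 _) M0).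
apply: ge0_ler_powR => //; rewrite ?nnegrE ?addr_ge0 //.
by rewrite -[g x](subrK (h x)) addrK (le_trans (ler_normD _ _)) ?lerD2l.
Qed.

Lemma fin_dim_valued0 : fin_dim_valued (fun _ : R => 0 : V).
Proof. by exists 0%N, (fun _ => 0) => t; exists (fun _ => 0); rewrite big_ord0. Qed.

Lemma Lpb0 p : 0 < p -> Lpb p (fun _ : R => 0 : V).
Proof.
move=> p0; split.
  exists (fun _ _ => 0); split; last by apply: aeW => t; exact: cvg_cst.
  move=> n; split.
    rewrite (_ : range _ = [set 0]); first exact: finite_set1.
    by apply/seteqP; split => [_ [x _ <-]//|_ ->]; exists 0.
  move=> v; have [->|v0] := eqVneq v 0.
    by rewrite (_ : _ @^-1` _ = setT) //; apply/seteqP; split.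
  rewrite (_ : _ @^-1` _ = set0) //; apply/seteqP; split => // x /= /esym/eqP.
  by rewrite (negbTE v0).
by exists 0 => t; rewrite /loc_int normr0 powR0 ?gt_eqF // integral0.
Qed.

Lemma Lpb_normal_weakly_normal p g : 0 < p -> Lpb_normal p g -> weakly_normal p g.
Proof.
move=> p0 gN eps eps0; have [delta [delta0 small]] := gN eps eps0.
exists (delta / 2); split; first by rewrite divr_gt0.
exists (fun _ => 0); split; first exact: fin_dim_valued0.
split; first exact: Lpb0.
move=> t; under eq_fun do rewrite subr0.
by apply: small; rewrite ?divr_gt0 //; lra.
Qed.

Lemma space_regular_weakly_normal p g : 0 < p -> space_regular p g ->
  weakly_normal p g.
Proof.
move=> p0 gS eps eps0; have [h [hfin [hLpb dist]]] := gS _ (powR_gt0 p^-1 eps0).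
exists 1; split => //; exists h; split => //; split => // t.
exact/(loc_int_le_Lpb_dist t p0 (ltW eps0)).
Qed.

Lemma time_regular_Lpb_normal p g : 0 < p -> time_regular p g -> Lpb_normal p g.
Proof.
move=> p0 gT eps eps0.
have two_p0 : 0 < 2 `^ p by exact: powR_gt0.
pose eps1 := eps / (2 * 2 `^ p).
have eps10 : 0 < eps1 by rewrite divr_gt0 ?mulr_gt0.
have [h [/(_ 0%N) [_ [_ [M hM]]] dist]] := gT _ (powR_gt0 p^-1 eps10).
rewrite derive1n0 in hM.
pose c := (2 * M) `^ p; have c0 : 0 <= c by exact: powR_ge0.
exists (Num.min 1 (eps / (2 * (c + 1)))); split.
  by rewrite lt_min ltr01 divr_gt0 ?mulr_gt0 //; lra.
move=> tau tau0; rewrite lt_min => /andP[tau1 tau_eps] t.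
apply: le_trans (loc_int_le_bounded_approx g t (ltW p0) tau0 hM) _.
have gh_small : (loc_int p (fun x => (g x - h x)%R) t tau <= eps1%:E)%E.
  apply: le_trans (le_loc_int _ _ _ (ltW tau1)) _.
  exact: loc_int_le_Lpb_dist t p0 (ltW eps10) dist.
apply: le_trans (leeD2r _ (lee_wpmul2l _ gh_small)) _; first by rewrite lee_fin ltW.
rewrite -EFinM -EFinD lee_fin.
have -> : 2 `^ p * eps1 = eps / 2 by rewrite /eps1; field; rewrite gt_eqF.
have c1 : 0 < c + 1 by lra.
have : (c + 1) * tau < (c + 1) * (eps / (2 * (c + 1))) by rewrite ltr_pM2l.
have -> : (c + 1) * (eps / (2 * (c + 1))) = eps / 2 by field; rewrite gt_eqF.
rewrite -/c mulrDl mul1r; lra.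
Qed.

End loc_int.

Theorem proposition2p14 (R : realType) (V : completeNormedModType R)
  (p : R) (g : R -> V) :
  @reflexive_space R V -> 1 < p ->
  Lpb p g ->
  (time_regular p g \/ space_regular p g \/ Lpb_normal p g) ->
  weakly_normal p g.
Proof.
move=> _ p1 _ regular; have p0 : 0 < p by lra.
case: regular => [gT|[gS|gN]].
- exact/Lpb_normal_weakly_normal/time_regular_Lpb_normal.
- exact: space_regular_weakly_normal.
- exact: Lpb_normal_weakly_normal.
Qed.
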